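(* Let ${\bf a}=(a_1,\dots,a_n)\in(\mathbb C^* )^n$ and $ev_{\bf a}:\mathfrak{OA}\to\bigoplus^n\mathfrak{sl}_2$, $X\mapsto(ev_{a_1}(X),\dots,ev_{a_n}(X))$. Then $\ker(ev_{\bf a})=\mathfrak I_{U_{\bf a}(t)}$. Moreover $ev_{\bf a}$ is surjective if and only if $a_j\neq\pm1$ for all $j$ and $a_j\neq a_k^{\pm1}$ for all $j\neq k$.
   Context: Work over $\mathbb C$. $\mathfrak{sl}_2$ has basis $e,f,h$ with $[e,f]=h$, $[h,e]=2e$, $[h,f]=-2f$. The Onsager algebra is the Lie subalgebra $\mathfrak{OA}=\{p(t)e+p(t^{-1})f+q(t)h:\ p,q\in\mathbb C[t,t^{-1}],\ q(t^{-1})=-q(t)\}$ of the loop algebra $\mathbb C[t,t^{-1}]\otimes\mathfrak{sl}_2$. For $a\in\mathbb C^*$, $ev_a:\mathfrak{OA}\to\mathfrak{sl}_2$, $p(t)x\mapsto p(a)x$; $U_a(t)=t^2-(a+a^{-1})t+1$ if $a^2\neq1$ and $U_a(t)=t-a$ if $a=\pm1$ (note $U_a=U_{a^{-1}}$). $U_{\bf a}(t)$ is the product of the distinct polynomials among $U_{a_1}(t),\dots,U_{a_n}(t)$. For a reciprocal polynomial $P$ (nonconstant monic with $P(t)=\pm t^{\deg P}P(t^{-1})$), $\mathfrak I_{P(t)}=\{p(t)e+p(t^{-1})f+q(t)h\in\mathfrak{OA}:\ p(t),q(t)\in P(t)\mathbb C[t,t^{-1}]\}$. *)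

From HB Require Import structures.
From mathcomp Require Import all_boot all_algebra.
From mathcomp Require Import reals complex.
Set Implicit Arguments. Unset Strict Implicit. Unset Printing Implicit Defensive.
Import GRing.Theory Num.Theory.
Local Open Scope ring_scope.

Section Onsager.
Variable F : fieldType.

(* Laurent polynomials: the pair (P, k) represents t^{-k} * P(t) in F[t,t^{-1}].
   Two pairs represent the same Laurent polynomial iff [lequiv] holds. *)
Definition laurent := ({poly F} * nat)%type.

Definition lequiv (p q : laurent) : Prop := p.1 * 'X^(q.2) = q.1 * 'X^(p.2).

Definition lopp (p : laurent) : laurent := (- p.1, p.2).

(* p(t) |-> p(t^{-1}):  t^{-k} sum_i c_i t^i  |->  t^{-s} sum_{i<s} c_i t^{k+s-i}, s = size P *)
Definition lrefl (p : laurent) : laurent :=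
  (\sum_(i < size p.1) p.1`_i *: 'X^(p.2 + size p.1 - i), size p.1).

Definition leval (p : laurent) (a : F) : F := p.1.[a] / a ^+ p.2.

Definition ldvd (P : {poly F}) (p : laurent) : Prop :=
  exists q : laurent, lequiv p (P * q.1, q.2).

(* sl2 elements: (x_e, x_f, x_h) stands for x_e e + x_f f + x_h h. *)
Definition sl2 := (F * F * F)%type.

(* An element of the loop algebra of the form p(t) e + p(t^{-1}) f + q(t) h is
   encoded by the pair (p, q). *)
Definition onsager := (laurent * laurent)%type.

Definition in_OA (X : onsager) : Prop := lequiv (lrefl X.2) (lopp X.2).

Definition ev (a : F) (X : onsager) : sl2 :=
  (leval X.1 a, leval (lrefl X.1) a, leval X.2 a).

Definition in_ideal (P : {poly F}) (X : onsager) : Prop :=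
  in_OA X /\ ldvd P X.1 /\ ldvd P X.2.

Definition Upoly (a : F) : {poly F} :=
  if a ^+ 2 != 1 then 'X^2 - (a + a^-1) *: 'X + 1 else 'X - a%:P.

Definition Ubold (n : nat) (a : 'I_n -> F) : {poly F} :=
  \prod_(u <- undup [seq Upoly (a i) | i <- enum 'I_n]) u.

End Onsager.

(** Write [X = p(t) e + p(t^-1) f + q(t) h] with [q(t^-1) = -q(t)].  Then
    [ev_a X = 0] iff [p] and [q] vanish at [a] and [a^-1], and [U_a] is the
    squarefree polynomial whose roots are exactly the [a_j^±1]; this gives the
    kernel.  The conditions on [a] say exactly that the [2n] points [a_j^±1]
    are pairwise distinct.  If they are, interpolation prescribes [p] at all
    of them (the [e] and [f] components), and [q = r(t) - r(t^-1)] with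
    [r(a_j) = x_j], [r(a_j^-1) = 0] realises the [h] components.  Conversely,
    an [h] component [q(a) = 1] forces [a^-1 <> a], since [q(a^-1) = -q(a)];
    and an [e] component with [p(a_j) = 1], [p(a_k^±1) = 0] separates [a_j]
    from [a_k^±1]. *)
From HB Require Import structures.
From mathcomp Require Import all_boot all_order all_algebra.
From mathcomp Require Import reals complex.
From mathcomp Require Import ring.
Import Order.TTheory GRing.Theory Num.Theory.
Local Open Scope ring_scope.
Set Implicit Arguments. Unset Strict Implicit. Unset Printing Implicit Defensive.

Section LaurentEval.
Variable F : fieldType.
Implicit Types (p q : laurent F) (P : {poly F}) (x y : F).

Lemma leval_lequiv p q y : y != 0 -> lequiv p q -> leval p y = leval q y.
Proof.
move=> y0; rewrite /lequiv /leval => /(congr1 (horner^~ y)).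
rewrite !hornerM !hornerXn => e.
have -> : p.1.[y] / y ^+ p.2 = p.1.[y] * y ^+ q.2 / (y ^+ p.2 * y ^+ q.2).
  by field; rewrite !expf_neq0.
by rewrite e; field; rewrite !expf_neq0.
Qed.

Lemma leval_lopp p y : leval (lopp p) y = - leval p y.
Proof. by rewrite /leval /= hornerN mulNr. Qed.

Lemma leval_lrefl p y : y != 0 -> leval (lrefl p) y = leval p y^-1.
Proof.
move=> y0; rewrite /leval /lrefl /= horner_sum (horner_coef p.1) mulr_suml.
rewrite exprVn invrK mulr_suml; apply: eq_bigr => i _.
rewrite hornerZ hornerXn exprVn.
have le_i : (i <= size p.1)%N by apply: ltnW.
rewrite -addnBA // exprD -[in y ^+ size p.1](subnK le_i) exprD.
by field; rewrite ?expf_neq0.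
Qed.

Lemma leval_poly P x : leval (P, 0%N) x = P.[x].
Proof. by rewrite /leval expr0 divr1. Qed.

Lemma root_leval0 p y : y != 0 -> leval p y = 0 -> root p.1 y.
Proof.
move=> y0 /eqP; rewrite /leval /root mulf_eq0 invr_eq0 expf_eq0.
by rewrite (negbTE y0) andbF orbF.
Qed.

Lemma ldvd_leval0 P p y : y != 0 -> ldvd P p -> root P y -> leval p y = 0.
Proof.
move=> y0 [q eq_pq] /rootP Py0.
by rewrite (leval_lequiv y0 eq_pq) /leval /= hornerM Py0 !mul0r.
Qed.

Lemma ldvdP P p : P %| p.1 -> ldvd P p.
Proof.
case: p => p k /= /dvdpP [Q ->]; exists (Q, k).
by rewrite /lequiv /= [Q * P]mulrC.
Qed.

Definition lsub p q : laurent F := (p.1 * 'X^(q.2) - q.1 * 'X^(p.2), (p.2 + q.2)%N).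

Lemma leval_lsub p q x : x != 0 -> leval (lsub p q) x = leval p x - leval q x.
Proof.
move=> x0; rewrite /leval /lsub /= hornerD hornerN !hornerM !hornerXn exprD.
by field; rewrite ?expf_neq0.
Qed.

Lemma in_OA_levalV (X : onsager F) x :
  in_OA X -> x != 0 -> leval X.2 x^-1 = - leval X.2 x.
Proof.
move=> OA_X x0; rewrite -leval_lrefl // (leval_lequiv x0 OA_X).
exact: leval_lopp.
Qed.

End LaurentEval.

Section LaurentIdentity.
Variable F : numFieldType.
Implicit Types p q : laurent F.

(* A characteristic-zero field has infinitely many nonzero points, so a
   polynomial identity can be tested at [1, 2, 3, ...]. *)
Lemma lequiv_leval p q :
  (forall x : F, x != 0 -> leval p x = leval q x) -> lequiv p q.
Proof.
move=> eq_pq; apply/eqP; rewrite -subr_eq0; apply/negPn/negP => D0.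
set D := _ - _ in D0.
pose rs := [seq i.+1%:R : F | i <- iota 0 (size D)].
have rs_uniq : uniq rs.
  by rewrite map_inj_uniq ?iota_uniq // => i j /eqP; rewrite eqr_nat eqSS => /eqP.
suff roots_D : all (root D) rs.
  by have := max_poly_roots D0 roots_D rs_uniq; rewrite size_map size_iota ltnn.
apply/allP => _ /mapP [i _ ->]; set z := _%:R.
have z0 : z != 0 by rewrite pnatr_eq0.
rewrite /root /D hornerD hornerN !hornerM !hornerXn.
have -> : p.1.[z] = q.1.[z] / z ^+ q.2 * z ^+ p.2.
  by rewrite -[_ / _](eq_pq z z0) divfK // expf_neq0.
by apply/eqP; field; exact: expf_neq0.
Qed.

Lemma in_OA_antisym p q : in_OA (p, lsub q (lrefl q)).
Proof.
apply: lequiv_leval => x x0; have xV0 : x^-1 != 0 by rewrite invr_eq0.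
rewrite leval_lopp leval_lrefl // !leval_lsub // !leval_lrefl // invrK.
by rewrite opprB.
Qed.

End LaurentIdentity.

Section Upoly.
Variable F : fieldType.
Implicit Types (c d x : F) (P : {poly F}).

Lemma invr_sqr_eq1 c : c ^+ 2 = 1 -> c^-1 = c.
Proof.
by move/eqP; rewrite sqrf_eq1 => /orP[] /eqP ->; rewrite ?invr1 ?invrN1.
Qed.

Lemma UpolyE c : c != 0 -> c ^+ 2 != 1 ->
  Upoly c = ('X - c%:P) * ('X - (c^-1)%:P).
Proof.
move=> c0 c2; rewrite /Upoly c2 -mul_polyC polyCD.
have <- : (c%:P * (c^-1)%:P : {poly F}) = 1 by rewrite -polyCM mulfV.
ring.
Qed.

Lemma UpolyV c : Upoly c^-1 = Upoly c.
Proof.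
rewrite /Upoly exprVn invr_eq1; case: ifP => [_ | /negbFE/eqP c2].
  by rewrite invrK [c^-1 + c]addrC.
by rewrite invr_sqr_eq1.
Qed.

Lemma root_Upoly c x : c != 0 -> root (Upoly c) x = (x == c) || (x == c^-1).
Proof.
move=> c0; have [c2 | c2] := eqVneq (c ^+ 2) 1.
  by rewrite /Upoly c2 eqxx root_XsubC (invr_sqr_eq1 c2) orbb.
by rewrite UpolyE // rootM !root_XsubC.
Qed.

Lemma Upoly_dvdp c P : c != 0 -> root P c -> root P c^-1 -> Upoly c %| P.
Proof.
move=> c0 Pc PcV; have [c2 | c2] := eqVneq (c ^+ 2) 1.
  by rewrite /Upoly c2 eqxx dvdp_XsubCl.
rewrite UpolyE //; have := uniq_roots_dvdp (rs := [:: c; c^-1]) (p := P).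
rewrite big_cons big_seq1; apply; first by rewrite /= Pc PcV.
rewrite uniq_rootsE /= inE andbT; apply: contra c2 => /eqP cV.
by rewrite expr2 {2}cV mulfV.
Qed.

Lemma Upoly_root_eq c x : c != 0 -> root (Upoly c) x -> Upoly c = Upoly x.
Proof. by move=> c0; rewrite root_Upoly // => /orP[] /eqP ->; rewrite ?UpolyV. Qed.

(* Distinct [U]'s have no common root, so their product divides every
   polynomial vanishing on all their roots. *)
Lemma dvdp_prod_Upoly (s : seq {poly F}) P : uniq s ->
    (forall u, u \in s -> exists2 c, c != 0 & u = Upoly c) ->
    (forall u x, u \in s -> root u x -> root P x) ->
  \prod_(u <- s) u %| P.
Proof.
elim: s P => [|u s IHs] P /=; first by rewrite big_nil dvd1p.
case/andP=> u_s uniq_s sU sP; rewrite big_cons.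
have sU' v : v \in s -> exists2 d, d != 0 & v = Upoly d.
  by move=> vs; apply: sU; rewrite inE vs orbT.
have [c c0 uc] := sU u (mem_head _ _).
have /dvdpP [P' eP] : u %| P.
  have Pu x : root u x -> root P x := sP u x (mem_head _ _).
  rewrite uc; apply: (Upoly_dvdp c0); apply: Pu; rewrite uc root_Upoly //.
    by rewrite eqxx.
  by rewrite eqxx orbT.
rewrite eP [P' * u]mulrC; apply: dvdp_mul (dvdpp u) (IHs P' uniq_s sU' _) => v x vs vx.
have := sP v x; rewrite inE vs orbT eP rootM => /(_ isT vx) /orP[] // ux.
have [d d0 vd] := sU' v vs.
suff uv : u = v by rewrite uv vs in u_s.
move: ux vx; rewrite uc vd => ux vx.
by rewrite (Upoly_root_eq c0 ux) (Upoly_root_eq d0 vx).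
Qed.

Lemma root_Ubold n (a : 'I_n -> F) j x : a j != 0 ->
  (x == a j) || (x == (a j)^-1) -> root (Ubold a) x.
Proof.
move=> aj0 xa; have Uj : Upoly (a j) \in undup [seq Upoly (a i) | i <- enum 'I_n].
  by rewrite mem_undup; apply/mapP; exists j; rewrite ?mem_enum.
by rewrite /Ubold (big_rem _ Uj) rootM root_Upoly ?xa.
Qed.

Lemma Ubold_dvdp n (a : 'I_n -> F) P : (forall j, a j != 0) ->
  (forall j, root P (a j) /\ root P (a j)^-1) -> Ubold a %| P.
Proof.
move=> a0 Pa; apply: dvdp_prod_Upoly; first exact: undup_uniq.
  by move=> u; rewrite mem_undup => /mapP [i _ ->]; exists (a i).
move=> u x; rewrite mem_undup => /mapP [i _ ->].
by rewrite root_Upoly // => /orP[] /eqP ->; case: (Pa i).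
Qed.

Lemma interpolation (I : finType) (b v : I -> F) : injective b ->
  exists P : {poly F}, forall i, P.[b i] = v i.
Proof.
move=> b_inj; pose L i := \prod_(j | j != i) ('X - (b j)%:P).
have Lb i k : (L i).[b k] = \prod_(j | j != i) (b k - b j).
  by rewrite horner_prod; apply: eq_bigr => j _; rewrite hornerXsubC.
have Lbi0 i : (L i).[b i] != 0.
  rewrite Lb; apply/prodf_neq0 => j ji; rewrite subr_eq0 eq_sym.
  by apply: contra ji => /eqP/b_inj ->.
exists (\sum_i (v i / (L i).[b i]) *: L i) => k.
rewrite horner_sum (bigD1 k) //= big1 ?addr0 => [|i ik]; rewrite hornerZ.
  by rewrite divfK.
by rewrite [(L i).[b k]]Lb (bigD1 k) 1?eq_sym //= subrr mul0r mulr0.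
Qed.

End Upoly.

Section Kernel.
Variables (F : fieldType) (n : nat) (a : 'I_n -> F).
Hypothesis a_neq0 : forall j, a j != 0.

Lemma evE x (X : onsager F) : x != 0 ->
  ev x X = (leval X.1 x, leval X.1 x^-1, leval X.2 x).
Proof. by move=> x0; rewrite /ev leval_lrefl. Qed.

Lemma ldvd_Ubold p :
  (forall j, leval p (a j) = 0 /\ leval p (a j)^-1 = 0) -> ldvd (Ubold a) p.
Proof.
move=> p0; apply/ldvdP/Ubold_dvdp => // j; have [pa paV] := p0 j.
by split; [exact: root_leval0 pa | apply: root_leval0 paV; rewrite invr_eq0].
Qed.

Lemma ldvd_Ubold_leval0 p j :
  ldvd (Ubold a) p -> leval p (a j) = 0 /\ leval p (a j)^-1 = 0.
Proof.
by move=> Up; split; apply: ldvd_leval0 Up _; rewrite ?invr_eq0 //;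
  apply: (root_Ubold (j := j)); rewrite // eqxx ?orbT.
Qed.

Lemma ker_ev_Ubold (X : onsager F) :
  (in_OA X /\ forall j, ev (a j) X = (0, 0, 0)) <-> in_ideal (Ubold a) X.
Proof.
split=> [[OA_X evX] | [OA_X [Up Uq]]].
  have ev0 j : [/\ leval X.1 (a j) = 0, leval X.1 (a j)^-1 = 0
                 & leval X.2 (a j) = 0].
    by move: (evX j); rewrite evE // => -[-> -> ->].
  split=> //; split; apply: ldvd_Ubold => j; have [p0 pV0 q0] := ev0 j => //.
  by rewrite in_OA_levalV // q0 oppr0.
split=> // j; have [p0 pV0] := ldvd_Ubold_leval0 j Up.
by have [q0 _] := ldvd_Ubold_leval0 j Uq; rewrite evE // p0 pV0 q0.
Qed.

End Kernel.

Section Surjectivity.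
Variables (F : numFieldType) (n : nat) (a : 'I_n -> F).
Hypothesis a_neq0 : forall j, a j != 0.

Definition ev_surjective := forall y : 'I_n -> sl2 F,
  exists X : onsager F, in_OA X /\ forall j, ev (a j) X = y j.

Lemma ev_surjective_neq_pm1 j : ev_surjective -> a j != 1 /\ a j != -1.
Proof.
move/(_ (fun=> (0, 0, 1))) => [X [OA_X evX]].
have q1 : leval X.2 (a j) = 1 by move: (evX j); rewrite evE // => -[_ _ ->].
have aV_neq : (a j)^-1 != a j.
  apply/eqP => aV; have := in_OA_levalV OA_X (a_neq0 j).
  rewrite aV q1 => /eqP; rewrite eq_sym lt_eqF //.
  exact: lt_trans (ltrN10 _) ltr01.
by split; apply: contra aV_neq => /eqP ->; rewrite ?invr1 ?invrN1.
Qed.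

Lemma ev_surjective_separated j k : ev_surjective -> j != k ->
  a j != a k /\ a j != (a k)^-1.
Proof.
move=> surj jk; pose y i : sl2 F := if i == j then (1, 0, 0) else (0, 0, 0).
have [X [_ evX]] := surj y.
have pj : leval X.1 (a j) = 1 by move: (evX j); rewrite evE // /y eqxx => -[].
have [pk pkV] : leval X.1 (a k) = 0 /\ leval X.1 (a k)^-1 = 0.
  by move: (evX k); rewrite evE // /y eq_sym (negbTE jk) => -[-> ->].
by split; apply/eqP => ajk; move: pj; rewrite ajk ?pk ?pkV => /eqP;
  rewrite eq_sym oner_eq0.
Qed.

Definition ev_points (s : 'I_n + 'I_n) : F :=
  match s with inl j => a j | inr j => (a j)^-1 end.

Lemma ev_points_inj :
  (forall j, a j != 1 /\ a j != -1) ->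
  (forall j k, j != k -> a j != a k /\ a j != (a k)^-1) ->
  injective ev_points.
Proof.
move=> a_pm1 a_sep.
have a_inj : injective a.
  move=> j k ajk; apply/eqP; apply: contraT => jk.
  by have [] := a_sep j k jk; rewrite ajk eqxx.
have aV_neq j k : a j != (a k)^-1.
  have [<- | jk] := eqVneq j k; last exact: (a_sep j k jk).2.
  apply: contraTN isT => /eqP ajV; have [a1 aN1] := a_pm1 j.
  have : a j ^+ 2 == 1 by rewrite expr2 {2}ajV mulfV.
  by rewrite sqrf_eq1 (negbTE a1) (negbTE aN1).
move=> [j|j] [k|k] /= ajk.
- by rewrite (a_inj _ _ ajk).
- by have := aV_neq j k; rewrite ajk eqxx.
- by have := aV_neq k j; rewrite ajk eqxx.
- by rewrite (a_inj _ _ (invr_inj ajk)).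
Qed.

Lemma ev_surjective_of_separated :
  (forall j, a j != 1 /\ a j != -1) ->
  (forall j k, j != k -> a j != a k /\ a j != (a k)^-1) ->
  ev_surjective.
Proof.
move=> a_pm1 a_sep y; have pts_inj := ev_points_inj a_pm1 a_sep.
have [P eP] := interpolation (fun s =>
  match s with inl j => (y j).1.1 | inr j => (y j).1.2 end) pts_inj.
have [Q eQ] := interpolation (fun s =>
  match s with inl j => (y j).2 | inr j => 0 end) pts_inj.
pose r : laurent F := (Q, 0%N).
exists ((P, 0%N), lsub r (lrefl r)); split; first exact: in_OA_antisym.
move=> j; have aV0 : (a j)^-1 != 0 by rewrite invr_eq0.
rewrite evE // leval_lsub // leval_lrefl // !leval_poly.
move: (eP (inl j)) (eP (inr j)) (eQ (inl j)) (eQ (inr j)) => /= -> -> -> ->.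
by rewrite subr0; case: (y j) => [[]].
Qed.

End Surjectivity.

Theorem lemma14 (R : realType) (n : nat) (a : 'I_n -> R[i])
    (ha : forall j, a j != 0) :
  (forall X : onsager R[i],
      (in_OA X /\ forall j, ev (a j) X = (0, 0, 0))
      <-> in_ideal (Ubold a) X)
  /\
  ((forall y : 'I_n -> sl2 R[i],
      exists X : onsager R[i], in_OA X /\ forall j, ev (a j) X = y j)
   <->
   ((forall j, a j != 1 /\ a j != -1) /\
    (forall j k, j != k -> a j != a k /\ a j != (a k)^-1))).
Proof.
split; first exact: ker_ev_Ubold.
split=> [surj | [a_pm1 a_sep]]; last exact: ev_surjective_of_separated.
split=> [j | j k]; first exact: ev_surjective_neq_pm1.
exact: ev_surjective_separated.
Qed.
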